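(* Consider a QRW on the non-negative integers with non trivial coins. All local states of the walk are transient if and only if the state $|0\rangle\otimes|\uparrow\rangle$ is transient.
   Context: Coins: for each $i\ge0$, $C_i=(c^i_{kl})_{k,l=1,2}$ is a $2\times2$ unitary matrix with $c^i_{11}\ne0$ (non trivial). Number the pure states $|0\uparrow\rangle,|0\downarrow\rangle,|1\uparrow\rangle,|1\downarrow\rangle,\dots$ as $0,1,2,3,\dots$. The unitary transition matrix $U=(U_{j,k})$ ($U_{j,k}$ = one-step amplitude from state $j$ to state $k$) has only the non-zero entries $U_{2i,2i+2}=c^i_{11}$, $U_{2i+1,2i+2}=c^i_{12}$ ($i\ge0$), $U_{2i,2i-1}=c^i_{21}$, $U_{2i+1,2i-1}=c^i_{22}$ ($i\ge1$), $U_{0,0}=c^0_{21}$, $U_{1,0}=c^0_{22}$. A state is a unit row vector $\psi\in\ell^2$; it is recurrent if $\sum_{n\ge1}|\psi U^n\psi^\dagger|^2=\infty$ and transient otherwise. A local state is a state that is a superposition of finitely many pure states (finitely many nonzero components). *)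

From HB Require Import structures.
From mathcomp Require Import all_boot all_order all_algebra.
From mathcomp Require Import complex.
From mathcomp Require Import all_classical all_reals all_analysis.
Set Implicit Arguments. Unset Strict Implicit. Unset Printing Implicit Defensive.
Import Order.TTheory GRing.Theory Num.Theory.
Import numFieldNormedType.Exports.
Local Open Scope ring_scope.

Section QRW.
Variable R : realType.

Definition cnorm2 (z : R[i]) : R := (complex.Re z) ^+ 2 + (complex.Im z) ^+ 2.

Definition unitary2 (C : 'M[R[i]]_2) : Prop :=
  C *m (map_mx (fun z : R[i] => z^*) C)^T = 1%:M.

(* Coins C i = (c^i_{kl}); entry c^i_{kl} is (C i) (k-1) (l-1).
   Pure states |i,up> = 2i, |i,down> = 2i+1. *)
Definition coin (C : nat -> 'M[R[i]]_2) (i : nat) (k l : 'I_2) : R[i] := C i k l.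

Definition ord1_2 : 'I_2 := @Ordinal 2 0 isT.
Definition ord2_2 : 'I_2 := @Ordinal 2 1 isT.

(* Transition matrix U_{j,k}: one-step amplitude from pure state j to k.
     U_{2i,2i+2} = c^i_11, U_{2i+1,2i+2} = c^i_12       (i >= 0)
     U_{2i,2i-1} = c^i_21, U_{2i+1,2i-1} = c^i_22       (i >= 1)
     U_{0,0} = c^0_21,     U_{1,0} = c^0_22
   all other entries are 0. *)
Definition Umat (C : nat -> 'M[R[i]]_2) (j k : nat) : R[i] :=
  let i := j./2 in
  let col := if odd j then ord2_2 else ord1_2 in
  if k == i.*2.+2 then coin C i ord1_2 col
  else if (0 < i)%N && (k == i.*2.-1) then coin C i ord2_2 col
  else if (i == 0)%N && (k == 0)%N then coin C i ord2_2 col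
  else 0.

(* Row vector times U: (psi U)_k = sum_j psi_j U_{j,k}.  Since U_{j,k} = 0
   whenever j > k+2, the sum over j reduces to the finite sum j < k+3. *)
Definition stepU (C : nat -> 'M[R[i]]_2) (psi : nat -> R[i]) : nat -> R[i] :=
  fun k => \sum_(j < k.+3) psi j * Umat C j k.

Definition evolve (C : nat -> 'M[R[i]]_2) (n : nat) (psi : nat -> R[i]) :=
  iter n (stepU C) psi.

Definition inner (phi psi : nat -> R[i]) : R[i] :=
  Complex (limn (series (fun k => complex.Re (phi k * (psi k)^*))))
          (limn (series (fun k => complex.Im (phi k * (psi k)^*)))).

Definition is_state (psi : nat -> R[i]) : Prop :=
  (\sum_(k <oo) ((cnorm2 (psi k))%:E) = 1)%E.

Definition local_state (psi : nat -> R[i]) : Prop :=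
  is_state psi /\ exists N : nat, forall k, (N <= k)%N -> psi k = 0.

Definition recurrent (C : nat -> 'M[R[i]]_2) (psi : nat -> R[i]) : Prop :=
  (\sum_(1 <= n <oo) ((cnorm2 (inner (evolve C n psi) psi))%:E) = +oo)%E.

Definition transient (C : nat -> 'M[R[i]]_2) (psi : nat -> R[i]) : Prop :=
  ~ recurrent C psi.

Definition e0 : nat -> R[i] := fun k => if k == 0%N then 1 else 0.

End QRW.

From HB Require Import structures.
From mathcomp Require Import all_boot all_order all_algebra.
From mathcomp Require Import complex.
From mathcomp Require Import all_classical all_reals all_analysis.
From mathcomp Require Import zify ring lra.
Import Order.TTheory GRing.Theory Num.Theory.
Import numFieldNormedType.Exports.
Local Open Scope ring_scope.
Set Implicit Arguments. Unset Strict Implicit. Unset Printing Implicit Defensive.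

(** Since c^i_11 <> 0, the equations U|i,up> = c^i_11 |i+1,up> + c^i_21 |i-1,down>
    and U|i,down> = c^i_12 |i+1,up> + c^i_22 |i-1,down> show inductively that for
    every pure state, and hence every local state phi, some U^M phi is a finite
    combination sum_k c_k U^k e0.  By unitarity, <U^n phi, phi> is then a fixed
    finite combination of the amplitudes a(m) = <U^m e0, e0> at shifted times
    m = n + k - l, so sum_n |<U^n phi, phi>|^2 is bounded by a constant times
    sum_m |a(m)|^2. *)

Lemma big_ord_widen0 (V : zmodType) n1 n2 (F : nat -> V) : (n1 <= n2)%N ->
  (forall i, (n1 <= i < n2)%N -> F i = 0) ->
  \sum_(i < n1) F i = \sum_(i < n2) F i.
Proof.
move=> le12 F0; rewrite (big_ord_widen _ _ le12) big_mkcond /=.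
apply: eq_bigr => i _; case: ifP => // /negbT; rewrite -leqNgt => le1i.
by rewrite F0 // le1i ltn_ord.
Qed.

Lemma big_ord_pad (V : pzRingType) K K' (c F : nat -> V) : (K <= K')%N ->
  \sum_(i < K) c i * F i = \sum_(i < K') (if (i < K)%N then c i else 0) * F i.
Proof.
move=> KK'; pose cK i := if (i < K)%N then c i else 0.
rewrite -(@big_ord_widen0 _ K K' (fun i => cK i * F i) KK').
  by apply: eq_bigr => i _; rewrite /cK ltn_ord.
by move=> i /andP[Ki _]; rewrite /cK ltnNge Ki mul0r.
Qed.

Lemma sum_delta (V : pzRingType) N t (F : nat -> V) : (t < N)%N ->
  \sum_(k < N) ((k : nat) == t)%:R * F k = F t.
Proof.
move=> tN; rewrite (bigD1 (Ordinal tN)) //= eqxx mul1r big1 ?addr0 //.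
by move=> k; rewrite -val_eqE => /negbTE /= ->; rewrite mul0r.
Qed.

Lemma limn_series_eventually0 (R : realType) (u : nat -> R) N :
  (forall k, (N <= k)%N -> u k = 0) -> limn (series u) = \sum_(k < N) u k.
Proof.
move=> u0; apply: lim_near_cst; first exact: Rhausdorff.
near=> n.
have Nn : (N <= n)%N by near: n; exists N.
rewrite /series /= big_mkord; apply/esym/big_ord_widen0 => // k /andP[Nk _].
exact: u0.
Unshelve. all: by end_near. Qed.

Lemma nneseries_bounded (R : realType) (f : nat -> R) m : (forall n, 0 <= f n) ->
  (\sum_(m <= n <oo) (f n)%:E != +oo)%E <->
  exists A, forall N, \sum_(m <= n < N) f n <= A.
Proof.
move=> f0; have f0E n : (0 <= (f n)%:E)%E by rewrite lee_fin.
split=> [fin|[A sumA]].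
  have le_lim N : ((\sum_(m <= n < N) f n)%:E <= \sum_(m <= n <oo) (f n)%:E)%E.
    by rewrite -sumEFin; apply: nneseries_lim_ge.
  have : (0 <= \sum_(m <= n <oo) (f n)%:E)%E by apply: nneseries_ge0.
  move: fin le_lim; case: (\sum_(m <= n <oo) (f n)%:E)%E => // r _ le_lim _.
  by exists r => N; rewrite -lee_fin.
have : (\sum_(m <= n <oo) (f n)%:E <= A%:E)%E.
  apply: lime_le; first exact: is_cvg_nneseries.
  by apply: nearW => N /=; rewrite sumEFin lee_fin.
by case: (\sum_(m <= n <oo) (f n)%:E)%E.
Qed.

Lemma bounded_sums_head (R : realType) (f : nat -> R) m K A :
  (forall n, 0 <= f n) -> (m <= K)%N ->
  (forall N, \sum_(K <= n < N) f n <= A) ->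
  forall N, \sum_(m <= n < N) f n <= \sum_(m <= n < K) f n + A.
Proof.
move=> f0 mK sumA N.
have sum_ge0 a b : 0 <= \sum_(a <= n < b) f n by exact: sumr_ge0.
apply: (@le_trans _ _ (\sum_(m <= n < maxn N K) f n)).
  have [Nm|mN] := leqP N m; first by rewrite big_geq ?sum_ge0.
  by rewrite (@big_cat_nat _ _ _ N m (maxn N K)) ?leq_maxl ?(ltnW mN) //= lerDl.
by rewrite (@big_cat_nat _ _ _ K m (maxn N K)) ?leq_maxr //= lerD2l.
Qed.

Lemma sum_shift_le (R : realType) (g : nat -> R) A s N :
  (forall n, 0 <= g n) -> (forall T, \sum_(1 <= n < T) g n <= A) -> (0 < s)%N ->
  \sum_(0 <= i < N) g (i + s)%N <= A.
Proof.
move=> g0 sumA s0.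
have -> : \sum_(0 <= i < N) g (i + s)%N = \sum_(s <= n < N + s) g n.
  by rewrite -{2}[s]add0n big_addn addnK.
apply: le_trans (sumA (N + s)%N).
rewrite (@big_cat_nat _ _ _ s 1 (N + s)) ?leq_addl //= lerDr.
exact: sumr_ge0.
Qed.

Section SquaredModulus.
Variable R : realType.
Implicit Types z w : R[i].

Lemma cnorm2_ge0 z : 0 <= cnorm2 z.
Proof. by rewrite /cnorm2 addr_ge0 // sqr_ge0. Qed.

Lemma cnorm2M z w : cnorm2 (z * w) = cnorm2 z * cnorm2 w.
Proof. by case: z => a b; case: w => c d; rewrite /cnorm2 /=; ring. Qed.

Lemma cnorm2D_le z w : cnorm2 (z + w) <= 2 * cnorm2 z + 2 * cnorm2 w.
Proof.
case: z => a b; case: w => c d; rewrite /cnorm2 /=.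
have := sqr_ge0 (a - c); have := sqr_ge0 (b - d); nra.
Qed.

Lemma cnorm2_sum_le N (F : nat -> R[i]) :
  cnorm2 (\sum_(i < N) F i) <= 2 ^+ N * \sum_(i < N) cnorm2 (F i).
Proof.
elim: N => [|N IH]; first by rewrite !big_ord0 /cnorm2 /= mulr0 expr0n /= add0r.
rewrite !big_ord_recr /= exprS.
have := cnorm2D_le (\sum_(i < N) F i) (F N).
have : 0 <= \sum_(i < N) cnorm2 (F i) by apply: sumr_ge0 => i _; exact: cnorm2_ge0.
have : 1 <= 2 ^+ N :> R by apply: exprn_ege1; lra.
have := cnorm2_ge0 (F N); nra.
Qed.

Lemma cnorm2_sum2_le K (F : nat -> nat -> R[i]) :
  cnorm2 (\sum_(k < K) \sum_(l < K) F k l)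
    <= 2 ^+ (K + K) * \sum_(k < K) \sum_(l < K) cnorm2 (F k l).
Proof.
apply: le_trans (cnorm2_sum_le K (fun k => \sum_(l < K) F k l)) _.
rewrite exprD -mulrA; apply: ler_wpM2l; first exact: exprn_ge0.
rewrite mulr_sumr; apply: ler_sum => k _; exact: cnorm2_sum_le.
Qed.

End SquaredModulus.

Lemma unitary2_cols (R : realType) (M : 'M[R[i]]_2) : unitary2 M ->
  forall a b : 'I_2, M ord1_2 a * (M ord1_2 b)^* + M ord2_2 a * (M ord2_2 b)^*
     = (a == b)%:R.
Proof.
rewrite /unitary2 => /mulmx1C MM1 a b.
have := congr1 (fun A : 'M[R[i]]_2 => (A a b)^*) MM1.
rewrite mxE big_ord_recr big_ord_recr big_ord0 /= add0r !mxE.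
rewrite rmorphD !rmorphM /= !conjCK conjC_nat.
have -> : (widen_ord (leqnSn 1) ord_max : 'I_2) = ord1_2 by apply/val_inj.
by have -> : (ord_max : 'I_2) = ord2_2 by apply/val_inj.
Qed.

Section Walk.
Variable R : realType.
Variable C : nat -> 'M[R[i]]_2.
Implicit Types psi phi chi b : nat -> R[i].

Definition colj (j : nat) : 'I_2 := if odd j then ord2_2 else ord1_2.

Lemma UmatE j k :
  Umat C j k = (k == (j./2).*2.+2)%:R * C (j./2) ord1_2 (colj j)
             + (k == (j./2).*2.-1)%:R * C (j./2) ord2_2 (colj j).
Proof.
rewrite /Umat /coin /colj; case: (j./2) => [|i] /=.
  by case: k => [|[|[|k]]]; rewrite /= ?mul0r ?mul1r ?addr0 ?add0r.
case: eqP => [->|_]; last by rewrite mul0r add0r; case: eqP; rewrite ?mul1r ?mul0r.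
rewrite mul1r doubleS /=; case: eqP => [|_]; last by rewrite mul0r addr0.
lia.
Qed.

Lemma Umat_far j k : (k.+3 <= j)%N || (j.+3 <= k)%N -> Umat C j k = 0.
Proof.
move=> far; have jE := odd_double_half j; rewrite UmatE.
have [-> ->] : (k == (j./2).*2.+2) = false /\ (k == (j./2).*2.-1) = false.
  by split; apply/eqP; move: far jE; rewrite -!muln2; lia.
by rewrite !mul0r addr0.
Qed.

Definition supp_below psi L := forall k, (L <= k)%N -> psi k = 0.

Lemma supp_below_le psi L L' :
  (L <= L')%N -> supp_below psi L -> supp_below psi L'.
Proof. by move=> LL' psi0 k L'k; rewrite psi0 ?(leq_trans LL'). Qed.

Lemma inner_supp_below phi psi N : supp_below phi N ->
  inner phi psi = \sum_(k < N) phi k * (psi k)^*.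
Proof.
move=> phi0; rewrite /inner !(@limn_series_eventually0 _ _ N); last first.
- by move=> k /phi0 ->; rewrite mul0r.
- by move=> k /phi0 ->; rewrite mul0r.
elim: N {phi0} => [|N IH]; first by rewrite !big_ord0.
by rewrite !big_ord_recr /= -IH; case: (phi N * (psi N)^*).
Qed.

Lemma stepU_supp_below psi L k : supp_below psi L ->
  stepU C psi k = \sum_(j < L) psi j * Umat C j k.
Proof.
move=> psi0; set F := fun j => psi j * Umat C j k.
rewrite /stepU (@big_ord_widen0 _ k.+3 (k.+3 + L) F) ?leq_addr //; last first.
  by move=> j /andP[kj _]; rewrite /F Umat_far ?kj ?mulr0.
rewrite [RHS](@big_ord_widen0 _ L (k.+3 + L) F) ?leq_addl //.
by move=> j /andP[Lj _]; rewrite /F psi0 ?mul0r.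
Qed.

Lemma supp_below_stepU psi L : supp_below psi L -> supp_below (stepU C psi) L.+2.
Proof.
move=> psi0 k Lk; rewrite (stepU_supp_below _ psi0) big1 // => j _.
by rewrite Umat_far ?mulr0 //; apply/orP; right; move: (ltn_ord j) Lk; lia.
Qed.

Lemma evolveS n psi : evolve C n.+1 psi = stepU C (evolve C n psi).
Proof. by []. Qed.

Lemma evolveD m n psi : evolve C (m + n) psi = evolve C m (evolve C n psi).
Proof. exact: iterD. Qed.

Lemma supp_below_evolve n psi L :
  supp_below psi L -> supp_below (evolve C n psi) (L + n.*2).
Proof.
move=> psi0; elim: n => [|n IH]; first by rewrite addn0.
by rewrite doubleS !addnS; exact: supp_below_stepU.
Qed.

Lemma stepU_sum K (c : nat -> R[i]) (F : nat -> nat -> R[i]) :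
  stepU C (fun x => \sum_(i < K) c i * F i x) =
  (fun x => \sum_(i < K) c i * stepU C (F i) x).
Proof.
apply: funext => k; rewrite /stepU.
under eq_bigr => j _ do rewrite mulr_suml.
rewrite exchange_big /=; apply: eq_bigr => i _.
by rewrite mulr_sumr; apply: eq_bigr => j _; rewrite mulrA.
Qed.

Lemma evolve_sum n K (c : nat -> R[i]) (F : nat -> nat -> R[i]) :
  evolve C n (fun x => \sum_(i < K) c i * F i x) =
  (fun x => \sum_(i < K) c i * evolve C n (F i) x).
Proof. by elim: n => [//|n IH]; rewrite evolveS IH (stepU_sum K c (fun i => evolve C n (F i))). Qed.

Lemma inner_sum K (c d : nat -> R[i]) (F H : nat -> nat -> R[i]) N :
  (forall k, (k < K)%N -> supp_below (F k) N) ->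
  inner (fun x => \sum_(k < K) c k * F k x) (fun x => \sum_(l < K) d l * H l x)
  = \sum_(k < K) \sum_(l < K) (c k * (d l)^*) * inner (F k) (H l).
Proof.
move=> F0.
have sum0 : supp_below (fun x => \sum_(k < K) c k * F k x) N.
  by move=> x Nx; rewrite big1 // => k _; rewrite F0 // mulr0.
rewrite (inner_supp_below _ sum0).
under eq_bigr => x _ do rewrite rmorph_sum /= mulr_suml.
rewrite exchange_big /=; apply: eq_bigr => k _.
under eq_bigr => x _ do rewrite mulr_sumr.
rewrite exchange_big /=; apply: eq_bigr => l _.
rewrite (inner_supp_below _ (F0 k (ltn_ord k))) mulr_sumr; apply: eq_bigr => x _.
by rewrite rmorphM /=; ring.
Qed.

Section Unitary.
Hypothesis hU : forall n, unitary2 (C n).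

Lemma Umat_rows_orthonormal j j' N : (j.+3 <= N)%N ->
  \sum_(k < N) Umat C j k * (Umat C j' k)^* = (j == j')%:R.
Proof.
move=> jN; set i := j./2; set i' := j'./2.
have E k : Umat C j k * (Umat C j' k)^* =
    (k == i.*2.+2)%:R * ((k == i'.*2.+2)%:R * (C i ord1_2 (colj j) * (C i' ord1_2 (colj j'))^*))
  + (k == i.*2.+2)%:R * ((k == i'.*2.-1)%:R * (C i ord1_2 (colj j) * (C i' ord2_2 (colj j'))^*))
  + ((k == i.*2.-1)%:R * ((k == i'.*2.+2)%:R * (C i ord2_2 (colj j) * (C i' ord1_2 (colj j'))^*))
  + (k == i.*2.-1)%:R * ((k == i'.*2.-1)%:R * (C i ord2_2 (colj j) * (C i' ord2_2 (colj j'))^*))).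
  by rewrite !UmatE rmorphD !rmorphM /= !conjC_nat; ring.
have ij := odd_double_half j.
have up_lt : (i.*2.+2 < N)%N by move: jN ij; lia.
have down_lt : (i.*2.-1 < N)%N by move: jN ij; lia.
rewrite (eq_bigr _ (fun (k : 'I_N) _ => E k)) !big_split /=.
rewrite !(sum_delta (fun k => (k == _)%:R * _) up_lt).
rewrite !(sum_delta (fun k => (k == _)%:R * _) down_lt).
have dbl_eq (a c : nat) : (a.*2.+2 == c.*2.+2) = (a == c)
    /\ (a.*2.-1 == c.*2.-1) = (a == c) /\ (a.*2.+2 == c.*2.-1) = false
    /\ (a.*2.-1 == c.*2.+2) = false.
  by rewrite -!muln2; do !split; first [apply/eqP/eqP | apply/eqP]; lia.
have [e1 [e2 [e3 e4]]] := dbl_eq i i'.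
rewrite e1 e2 e3 e4 !mul0r addr0 add0r.
have [eii'|ii'] := eqVneq i i'; last first.
  rewrite !mul0r addr0 (_ : j == j' = false) //.
  by apply: contraNF ii' => /eqP jj'; rewrite /i /i' jj'.
rewrite !mul1r -eii' unitary2_cols //; congr (_%:R).
have -> : (colj j == colj j') = (odd j == odd j').
  by rewrite /colj; case: (odd j); case: (odd j').
rewrite -[in RHS](odd_double_half j) -[in RHS](odd_double_half j') -/i -/i' eii'.
by rewrite eqn_add2r; case: (odd j); case: (odd j').
Qed.

Lemma stepU_isometry phi chi L : supp_below phi L -> supp_below chi L ->
  inner (stepU C phi) (stepU C chi) = inner phi chi.
Proof.
move=> phi0 chi0.
rewrite (inner_supp_below _ (supp_below_stepU phi0)) (inner_supp_below _ phi0).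
under eq_bigr => k _ do
  rewrite (stepU_supp_below _ phi0) (stepU_supp_below _ chi0) rmorph_sum /= mulr_suml.
rewrite exchange_big /=; apply: eq_bigr => j _.
under eq_bigr => k _ do rewrite mulr_sumr.
rewrite exchange_big /=.
under eq_bigr => j' _ do
  (under eq_bigr => k _ do rewrite rmorphM /= mulrACA; rewrite -mulr_sumr).
under eq_bigr => j' _ do rewrite (@Umat_rows_orthonormal j j' L.+2 (ltn_ord j)).
rewrite (bigD1 j) //= eqxx mulr1 big1 ?addr0 // => j' j'j.
by rewrite eq_sym val_eqE (negbTE j'j) mulr0.
Qed.

Lemma evolve_isometry n phi chi L : supp_below phi L -> supp_below chi L ->
  inner (evolve C n phi) (evolve C n chi) = inner phi chi.
Proof.
elim: n => [//|n IH] phi0 chi0 /=.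
by rewrite (stepU_isometry (supp_below_evolve phi0) (supp_below_evolve chi0)) IH.
Qed.

Lemma inner_evolve_shift b L m l : supp_below b L -> (l <= m)%N ->
  inner (evolve C m b) (evolve C l b) = inner (evolve C (m - l) b) b.
Proof.
move=> b0 lm; rewrite -{1}(subnK lm) addnC evolveD.
apply: (@evolve_isometry _ _ _ (L + (m - l).*2)); first exact: supp_below_evolve.
by apply: supp_below_le b0; rewrite leq_addr.
Qed.

End Unitary.

Definition pure (j : nat) : nat -> R[i] := fun k => (k == j)%:R.

Lemma stepU_pure j :
  stepU C (pure j) = fun x => C (j./2) ord1_2 (colj j) * pure ((j./2).*2.+2) x
                          + C (j./2) ord2_2 (colj j) * pure ((j./2).*2.-1) x.
Proof.
apply: funext => x.
have j0 : supp_below (pure j) j.+1.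
  by move=> k jk; rewrite /pure (_ : k == j = false) //; apply/eqP; lia.
rewrite (stepU_supp_below _ j0) (sum_delta (fun k => Umat C k x)) // UmatE.
by rewrite mulrC [X in _ + X]mulrC.
Qed.

Definition orbit_span b psi :=
  exists K (c : nat -> R[i]), psi = fun x => \sum_(i < K) c i * evolve C i b x.

Definition eventually_in_orbit_span b psi :=
  exists M, orbit_span b (evolve C M psi).

Section OrbitSpan.
Variable b : nat -> R[i].

Lemma orbit_span_base : orbit_span b b.
Proof. by exists 1%N, (fun _ => 1); apply: funext => x; rewrite big_ord1 mul1r. Qed.

Lemma orbit_span_stepU psi : orbit_span b psi -> orbit_span b (stepU C psi).
Proof.
move=> [K [c ->]]; rewrite stepU_sum.
exists K.+1, (fun i => if i is i'.+1 then c i' else 0).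
by apply: funext => x; rewrite big_ord_recl /= mul0r add0r.
Qed.

Lemma orbit_span_evolve n psi : orbit_span b psi -> orbit_span b (evolve C n psi).
Proof. by move=> bpsi; elim: n => [//|n IH] /=; exact: orbit_span_stepU. Qed.

Lemma orbit_span_lin a1 a2 psi phi : orbit_span b psi -> orbit_span b phi ->
  orbit_span b (fun x => a1 * psi x + a2 * phi x).
Proof.
move=> [K1 [c1 ->]] [K2 [c2 ->]].
exists (K1 + K2)%N, (fun i => a1 * (if (i < K1)%N then c1 i else 0)
                           + a2 * (if (i < K2)%N then c2 i else 0)).
apply: funext => x; set F := fun i => evolve C i b x.
rewrite (@big_ord_pad _ K1 _ c1 F (leq_addr K2 K1)).
rewrite (@big_ord_pad _ K2 _ c2 F (leq_addl K1 K2)) !mulr_sumr -big_split /=.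
by apply: eq_bigr => i _; rewrite mulrDl !mulrA.
Qed.

Local Notation G := (eventually_in_orbit_span b).

Lemma eventually_in_orbit_span_stepU psi : G psi <-> G (stepU C psi).
Proof.
split=> [[M bM]|[M bM]]; last by exists M.+1; rewrite /evolve iterSr.
by exists M; rewrite /evolve -iterSr; exact: orbit_span_stepU.
Qed.

Lemma eventually_in_orbit_span_lin a1 a2 psi phi : G psi -> G phi ->
  G (fun x => a1 * psi x + a2 * phi x).
Proof.
move=> [M1 bM1] [M2 bM2]; exists (M1 + M2)%N.
have -> : evolve C (M1 + M2) (fun x => a1 * psi x + a2 * phi x) =
    (fun x => a1 * evolve C (M1 + M2) psi x + a2 * evolve C (M1 + M2) phi x).
  pose c i := if i is 0 then a1 else a2; pose F i := if i is 0 then psi else phi.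
  have sum2 (f : nat -> nat -> R[i]) :
      (fun x => \sum_(i < 2) c i * f i x) = fun x => a1 * f 0%N x + a2 * f 1%N x.
    by apply: funext => x; rewrite !big_ord_recr big_ord0 /= add0r.
  have := @evolve_sum (M1 + M2) 2 c F.
  by rewrite sum2 (sum2 (fun i => evolve C (M1 + M2) (F i))).
apply: orbit_span_lin; first by rewrite addnC evolveD; exact: orbit_span_evolve.
by rewrite evolveD; exact: orbit_span_evolve.
Qed.

Lemma eventually_in_orbit_span_sum L (c : nat -> R[i]) (F : nat -> nat -> R[i]) :
  (forall j, G (F j)) -> G (fun x => \sum_(j < L) c j * F j x).
Proof.
move=> GF; elim: L => [|L IH].
  exists 0%N, 0%N, (fun _ => 0).
  by apply: funext => x; rewrite /= !big_ord0.
have -> : (fun x => \sum_(j < L.+1) c j * F j x) =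
    (fun x => 1 * (\sum_(j < L) c j * F j x) + c L * F L x).
  by apply: funext => x; rewrite big_ord_recr /= mul1r.
exact: eventually_in_orbit_span_lin.
Qed.

Lemma eventually_in_orbit_span_pure : (forall n, C n ord1_2 ord1_2 != 0) ->
  G (pure 0) -> forall j, G (pure j).
Proof.
move=> hnt G0.
have upE i : stepU C (pure i.*2) = fun x =>
    C i ord1_2 ord1_2 * pure i.*2.+2 x + C i ord2_2 ord1_2 * pure i.*2.-1 x.
  by rewrite stepU_pure doubleK /colj odd_double.
have downE i : stepU C (pure i.*2.+1) = fun x =>
    C i ord1_2 ord2_2 * pure i.*2.+2 x + C i ord2_2 ord2_2 * pure i.*2.-1 x.
  by rewrite stepU_pure -[i.*2.+1]/(odd true + i.*2)%N half_bit_double /colj /= odd_double.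
(* solve U|i,up> = c^i_11 |i+1,up> + c^i_21 |i-1,down> for |i+1,up>, as c^i_11 <> 0 *)
have up i : G (pure i.*2) -> G (pure i.*2.-1) -> G (pure i.*2.+2).
  move=> Gup Gdown.
  have -> : pure i.*2.+2 = fun x => (C i ord1_2 ord1_2)^-1 * stepU C (pure i.*2) x
      + - ((C i ord1_2 ord1_2)^-1 * C i ord2_2 ord1_2) * pure i.*2.-1 x.
    by apply: funext => x; rewrite upE; field; exact: hnt.
  by apply: eventually_in_orbit_span_lin => //; exact: (eventually_in_orbit_span_stepU _).1.
have down i : G (pure i.*2.+2) -> G (pure i.*2.-1) -> G (pure i.*2.+1).
  by move=> Gup Gdown; apply/(eventually_in_orbit_span_stepU _).2; rewrite downE;
    exact: eventually_in_orbit_span_lin.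
have pair i : G (pure i.*2.-1) /\ G (pure i.*2).
  elim: i => [|i [Gdown Gup]]; first by split.
  have Gup' := up i Gup Gdown.
  by rewrite doubleS; split => //; exact: down.
move=> j; rewrite -[j](odd_double_half j); case: (odd j).
  by have [+ _] := pair j./2.+1; rewrite doubleS.
by have [_] := pair j./2; rewrite add0n.
Qed.

End OrbitSpan.

Lemma e0_pure : @e0 R = pure 0.
Proof. by apply: funext => k; rewrite /e0 /pure; case: (k == 0)%N. Qed.

Lemma eventually_in_orbit_span_e0 psi L : (forall n, C n ord1_2 ord1_2 != 0) ->
  supp_below psi L -> eventually_in_orbit_span (@e0 R) psi.
Proof.
move=> hnt psi0.
have -> : psi = fun x => \sum_(j < L) psi j * pure j x.
  apply: funext => x; have [xL|Lx] := ltnP x L; last first.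
    by rewrite psi0 // big1 // => j _; rewrite /pure (_ : x == j = false) ?mulr0 //;
      apply/eqP; move: (ltn_ord j); lia.
  by rewrite (bigD1 (Ordinal xL)) //= /pure eqxx mulr1 big1 ?addr0 // => j;
    rewrite -val_eqE eq_sym => /negbTE ->; rewrite mulr0.
apply: eventually_in_orbit_span_sum => j.
apply: eventually_in_orbit_span_pure => //; rewrite -e0_pure.
by exists 0%N; exact: orbit_span_base.
Qed.

Section Transience.
Hypothesis hU : forall n, unitary2 (C n).

Lemma inner_evolve_orbit_span b phi L M K (c : nat -> R[i]) n :
  supp_below b L -> supp_below phi L ->
  evolve C M phi = (fun x => \sum_(i < K) c i * evolve C i b x) -> (K <= n)%N ->
  inner (evolve C n phi) phi =
    \sum_(k < K) \sum_(l < K) (c k * (c l)^*) * inner (evolve C (n + k - l) b) b.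
Proof.
move=> b0 phi0 Mphi Kn.
rewrite -(@evolve_isometry hU M _ _ (L + n.*2)); last first.
- by apply: supp_below_le phi0; rewrite leq_addr.
- exact: supp_below_evolve.
rewrite -evolveD addnC evolveD Mphi evolve_sum.
have -> : (fun x => \sum_(i < K) c i * evolve C n (evolve C i b) x) =
          (fun x => \sum_(i < K) c i * evolve C (n + i) b x).
  by apply: funext => x; apply: eq_bigr => i _; rewrite evolveD.
rewrite (@inner_sum K c c (fun k => evolve C (n + k) b) (fun l => evolve C l b)
  (L + (n + K).*2)); last first.
  move=> k kK /=; apply: supp_below_le (@supp_below_evolve (n + k) _ _ b0).
  by rewrite -!muln2; lia.
apply: eq_bigr => k _; apply: eq_bigr => l _.
rewrite (inner_evolve_shift hU b0) //; move: (ltn_ord l); lia.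
Qed.

Lemma transient_of_eventually_in_orbit_span b phi L :
  supp_below b L -> supp_below phi L -> eventually_in_orbit_span b phi ->
  transient C b -> transient C phi.
Proof.
move=> b0 phi0 [M [K [c Mphi]]] tb.
pose g m := cnorm2 (inner (evolve C m b) b).
pose f n := cnorm2 (inner (evolve C n phi) phi).
have g0 m : 0 <= g m by exact: cnorm2_ge0.
have f0 n : 0 <= f n by exact: cnorm2_ge0.
have [A sumA] : exists A, forall N, \sum_(1 <= n < N) g n <= A.
  by apply/(nneseries_bounded _ g0); exact/eqP.
pose w k l := cnorm2 (c k * (c l)^*).
have f_le n : (K < n)%N ->
    f n <= 2 ^+ (K + K) * \sum_(k < K) \sum_(l < K) w k l * g (n + k - l)%N.
  move=> Kn; rewrite /f (inner_evolve_orbit_span b0 phi0 Mphi (ltnW Kn)).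
  apply: le_trans (@cnorm2_sum2_le _ K
    (fun k l => c k * (c l)^* * inner (evolve C (n + k - l) b) b)) _.
  by under eq_bigr => k _ do under eq_bigr => l _ do rewrite cnorm2M.
have tail N : \sum_(K.+1 <= n < N) f n
    <= 2 ^+ (K + K) * \sum_(k < K) \sum_(l < K) w k l * A.
  apply: le_trans (ler_sum_nat (fun n Kn => f_le n (proj1 (andP Kn)))) _.
  rewrite -mulr_sumr; apply: ler_wpM2l; first exact: exprn_ge0.
  rewrite exchange_big; apply: ler_sum => k _.
  rewrite exchange_big; apply: ler_sum => l _.
  rewrite -mulr_sumr; apply: ler_wpM2l; first exact: cnorm2_ge0.
  have -> : \sum_(K.+1 <= n < N) g (n + k - l)%N =
      \sum_(0 <= i < N - K.+1) g (i + (K.+1 + k - l))%N.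
    rewrite -{1}[K.+1]add0n big_addn; apply: eq_bigr => i _.
    by congr g; move: (ltn_ord l); lia.
  by apply: sum_shift_le => //; move: (ltn_ord l); lia.
rewrite /transient /recurrent; apply/eqP; apply/(nneseries_bounded _ f0).
by eexists; exact: bounded_sums_head tail.
Qed.

End Transience.

End Walk.

Lemma e0_local (R : realType) : local_state (@e0 R).
Proof.
split; last by exists 1%N => k; case: k.
have partial m : (\sum_(0 <= k < m.+1) (cnorm2 (@e0 R k))%:E = 1)%E.
  rewrite big_nat_recl // big1_seq; last first.
    by move=> k _; rewrite /e0 /cnorm2 /= expr0n /= add0r.
  by rewrite /e0 /cnorm2 /= expr1n expr0n /= !addr0.
rewrite /is_state; apply: lim_near_cst; first exact: ereal_hausdorff.
near=> n.
have n1 : (0 < n)%N by near: n; exists 1%N.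
by rewrite -(prednK n1) partial.
Unshelve. all: by end_near.
Qed.

Theorem corollary1 (R : realType) (C : nat -> 'M[R[i]]_2)
  (hU : forall n, unitary2 (C n))
  (hnt : forall n, C n ord1_2 ord1_2 != 0) :
  (forall psi : nat -> R[i], local_state psi -> transient C psi)
  <-> transient C (@e0 R).
Proof.
split=> [all_transient | e0_transient psi [_ [N psi0]]].
  exact/all_transient/e0_local.
have e0_supp : supp_below (@e0 R) 1 by case.
apply: (transient_of_eventually_in_orbit_span hU (L := maxn 1 N) _ _ _ e0_transient).
- by apply: supp_below_le e0_supp; rewrite leq_maxl.
- by apply: supp_below_le psi0; rewrite leq_maxr.
- exact: eventually_in_orbit_span_e0 hnt psi0.
Qed.
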